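(* Let $n$ be a positive integer and $z$ a complex variable, and define $$g(z)=\sum_{t=0}^{n}\binom{t+n}{t}\left(-\frac12\right)^t(1+z)^t\sum_{s=0}^{n-t}\binom ns\binom n{s+t}z^s.$$ Then $g(z)=0$ if $n$ is odd, and $g(z)=\dfrac{(-1)^{n/2}}{2^n}\dbinom{n}{n/2}(z-1)^n$ if $n$ is even. *)

From HB Require Import structures.
From mathcomp Require Import all_boot all_order all_algebra.
From mathcomp Require Import complex.
Set Implicit Arguments. Unset Strict Implicit. Unset Printing Implicit Defensive.
Import Order.TTheory GRing.Theory Num.Theory.
Local Open Scope ring_scope.

Definition gfun (R : rcfType) (n : nat) (z : R[i]) : R[i] :=
  \sum_(0 <= t < n.+1)
    ('C(t + n, t))%:R * (- (2%:R)^-1) ^+ t * (1 + z) ^+ t *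
    \sum_(0 <= s < (n - t).+1) ('C(n, s) * 'C(n, s + t))%:R * z ^+ s.

(* Put P(X) = (X + 1)^n (X + z)^n.  The inner sum of g is the coefficient of
   X^(t+n) in P, and binomial expansion of (X + w)^(t+n) shows that g is the
   coefficient of X^n in P(X + w) for w = -(1 + z)/2.  This shift centres the
   roots -1 and -z of P at +-c with c = (1 - z)/2, so P(X + w) = (X^2 - c^2)^n,
   whose coefficient of X^n vanishes for odd n and is C(n, n/2) (-c^2)^(n/2)
   for even n. *)
From HB Require Import structures.
From mathcomp Require Import all_boot all_order all_algebra.
From mathcomp Require Import complex.
From mathcomp Require Import zify ring.
Import GRing.Theory Num.Theory.
Local Open Scope ring_scope.

Section VanishingSums.
Variables (V : zmodType) (f : nat -> V).

Lemma sumr_nat_zero_tail m k : (m <= k)%N ->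
  (forall i, (m <= i < k)%N -> f i = 0) ->
  \sum_(0 <= i < k) f i = \sum_(0 <= i < m) f i.
Proof.
move=> le_mk f0; rewrite (big_cat_nat (leq0n m) le_mk) /=.
by rewrite [X in _ + X]big_nat_cond [X in _ + X]big1 ?addr0 // => i /andP[/f0].
Qed.

Lemma sumr_nat_zero_head a k : (forall i, (i < a)%N -> f i = 0) ->
  \sum_(0 <= i < a + k) f i = \sum_(0 <= i < k) f (i + a)%N.
Proof.
move=> f0; rewrite (big_cat_nat (leq0n a) (leq_addr k a)) /=.
rewrite [X in X + _]big_nat_cond [X in X + _]big1 ?add0r; last first.
  by move=> i /andP[/andP[_ /f0]].
by rewrite -{1}(add0n a) big_addn addKn.
Qed.

End VanishingSums.

Lemma coef_XaddC_exp (R : comNzRingType) (a : R) m i :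
  (('X + a%:P) ^+ m)`_i = 'C(m, i)%:R * a ^+ (m - i).
Proof.
rewrite addrC exprDn coef_sum.
have coef_term (j : 'I_m.+1) :
    ((a%:P ^+ (m - j) * 'X ^+ j) *+ 'C(m, j))`_i
    = if i == j then 'C(m, i)%:R * a ^+ (m - i) else 0.
  rewrite coefMn -rmorphXn coefCM coefXn.
  by case: eqP => [->|_]; rewrite ?mulr1 ?mulr_natl // mulr0 mul0rn.
rewrite (eq_bigr _ (fun j _ => coef_term j)) -big_mkcond /=.
have [lt_im | le_mi] := ltnP i m.+1.
  by rewrite (big_pred1 (Ordinal lt_im)) // => j; rewrite -val_eqE eq_sym.
rewrite bin_small // mul0r big_pred0 // => j.
by apply/eqP => eq_ij; move: (ltn_ord j); rewrite -eq_ij ltnNge le_mi.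
Qed.

Lemma coef_comp_XaddC (R : comNzRingType) (P : {poly R}) (w : R) k m :
  (size P <= (m + k).+1)%N ->
  (P \Po ('X + w%:P))`_k
  = \sum_(0 <= t < m.+1) P`_(t + k) * ('C(t + k, t)%:R * w ^+ t).
Proof.
move=> sizeP; rewrite coef_comp_poly.
rewrite -(big_mkord xpredT (fun i => P`_i * (('X + w%:P) ^+ i)`_k)).
rewrite -(@sumr_nat_zero_tail _ _ _ (m + k).+1) //; last first.
  by move=> i /andP[le_Pi _]; rewrite nth_default ?mul0r.
rewrite -addSn addnC sumr_nat_zero_head => [|i lt_ik]; last first.
  by rewrite coef_XaddC_exp bin_small ?mul0r ?mulr0.
apply: eq_big_nat => t _; rewrite coef_XaddC_exp addnK.
by rewrite -[X in 'C(_, X)](addKn t k) bin_sub ?leq_addr.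
Qed.

Lemma coef_XaddC_exp_mul (R : comNzRingType) (z : R) n t : (t <= n)%N ->
  (('X + 1%:P) ^+ n * ('X + z%:P) ^+ n)`_(t + n)
  = \sum_(0 <= s < (n - t).+1) ('C(n, s) * 'C(n, s + t))%:R * z ^+ s.
Proof.
move=> le_tn; rewrite coefM -addnS.
rewrite -(big_mkord xpredT
  (fun j => (('X + 1%:P) ^+ n)`_j * (('X + z%:P) ^+ n)`_(t + n - j))).
rewrite sumr_nat_zero_head => [|j lt_jt]; last first.
  by rewrite !coef_XaddC_exp [X in _ * (X%:R * _)]bin_small ?mul0r ?mulr0 //; lia.
rewrite (@sumr_nat_zero_tail _ _ (n - t).+1) => [||s /andP[lt_s le_s]]; last 2 first.
- lia.
- by rewrite coef_XaddC_exp bin_small ?mul0r //; lia.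
apply: eq_big_nat => s /andP[_ lt_s].
have -> : (t + n - (s + t) = n - s)%N by lia.
rewrite !coef_XaddC_exp expr1n mulr1 bin_sub ?subKn; try lia.
by rewrite natrM mulrCA mulrA.
Qed.

Lemma XaddC_mul_comp_midpoint (F : fieldType) (a b : F) : 2 != 0 :> F ->
  (('X + a%:P) * ('X + b%:P)) \Po ('X - ((a + b) / 2)%:P)
  = 'X ^+ 2 - (((a - b) / 2) ^+ 2)%:P.
Proof.
move=> two_neq0; rewrite comp_polyM !comp_polyD !comp_polyX !comp_polyC.
rewrite -!addrA -!polyCN -!polyCD.
have -> : - ((a + b) / 2) + a = (a - b) / 2 by field.
have -> : - ((a + b) / 2) + b = - ((a - b) / 2) by field.
by rewrite polyCN rmorphXn; ring.
Qed.

Lemma coef_X2addC_exp (R : comNzRingType) (b : R) n k :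
  (('X ^+ 2 + b%:P) ^+ n)`_k
  = if odd k then 0 else 'C(n, k./2)%:R * b ^+ (n - k./2).
Proof.
have -> : 'X ^+ 2 + b%:P = ('X + b%:P) \Po 'X ^+ 2.
  by rewrite comp_polyD comp_polyX comp_polyC.
rewrite -rmorphXn coef_comp_poly_Xn // dvdn2 divn2 coef_XaddC_exp.
by case: odd.
Qed.

Theorem lemma8 (R : rcfType) (n : nat) (hn : (0 < n)%N) (z : R[i]) :
  gfun n z =
  (if odd n then 0
   else (-1) ^+ (n./2) / (2%:R ^+ n) * ('C(n, n./2))%:R * (z - 1) ^+ n).
Proof.
have two_neq0 : 2 != 0 :> R[i] by rewrite pnatr_eq0.
set P : {poly R[i]} := ('X + 1%:P) * ('X + z%:P).
have sizePn : (size (P ^+ n) <= (n + n).+1)%N.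
  apply: leq_trans (size_poly_exp_leq _ _) _.
  by rewrite size_monicM ?monicXaddC -?size_poly_eq0 ?size_XaddC //= addnn -mul2n.
transitivity ((P ^+ n \Po ('X - ((1 + z) / 2)%:P))`_n).
  rewrite -polyCN (@coef_comp_XaddC _ _ _ _ _ sizePn) /gfun.
  apply: eq_big_nat => t /andP[_ le_tn].
  have -> : - ((1 + z) / 2) = - 2^-1 * (1 + z) by rewrite mulrC mulNr.
  by rewrite /P exprMn coef_XaddC_exp_mul // exprMn; ring.
rewrite rmorphXn /= XaddC_mul_comp_midpoint // -polyCN coef_X2addC_exp.
case: ifP => // /negbT even_n.
have [k ->] : exists k, n = k.*2 by exists n./2; rewrite even_halfK.
rewrite doubleK -[in (_ - k)%N]addnn addnK.
have -> : - ((1 - z) / 2) ^+ 2 = -1 * ((z - 1) ^+ 2 / 2 ^+ 2).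
  by rewrite mulN1r expr_div_n -sqrrN opprB.
rewrite !exprMn exprVn -!exprM mul2n -addnn !exprD; ring.
Qed.
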